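(* Let $\{a,b\}$ be a $2$-element generating set of a finite abelian group $G$ such that $\mathrm{Cay}(G;a,b)$ does not have a hamiltonian cycle, $|G|$ is even, and $|G:\langle a-b\rangle|$ is odd. If $P$ and $P'$ are two arc-disjoint hamiltonian paths in $\mathrm{Cay}(G;a,b)$, with initial vertices $\iota$ and $\iota'$ and terminal vertices $\tau$ and $\tau'$ respectively, then $\iota'+\tau'=\iota+\tau$.
   Context: The Cayley digraph $\mathrm{Cay}(G;a,b)$ has vertex set $G$ and an arc from $v$ to $v+s$ for all $v\in G$, $s\in\{a,b\}$. A hamiltonian path (resp. cycle) is a directed path (resp. directed cycle) visiting every vertex exactly once; the initial and terminal vertices of a path are its first and last vertices. Arc-disjoint means sharing no arc. *)

From mathcomp Require Import all_boot all_order all_algebra all_fingroup.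
Set Implicit Arguments. Unset Strict Implicit. Unset Printing Implicit Defensive.
Import GRing.Theory.
Local Open Scope ring_scope.

(* Finite abelian groups are represented as finZmodType (additive notation);
   such types carry a canonical finGroupType structure (with * = +). *)

Definition cay_arc (G : finZmodType) (a b : G) : rel G :=
  fun v w => (w == v + a) || (w == v + b).

Definition ham_path (G : finZmodType) (a b : G) (x : G) (s : seq G) : bool :=
  [&& path (cay_arc a b) x s, uniq (x :: s) & size (x :: s) == #|G|].

Definition ham_cycle (G : finZmodType) (a b : G) (c : seq G) : bool :=
  [&& path.cycle (cay_arc a b) c, uniq c & size c == #|G|].

(* The arcs traversed by the path x :: s, as (tail, head) pairs. Since a != b
   in our setting, an arc of Cay(G;a,b) is determined by its endpoints. *)
Definition path_arcs (G : finZmodType) (x : G) (s : seq G) : seq (G * G) :=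
  zip (x :: s) s.

Definition arc_disjoint (G : finZmodType) (x : G) (s : seq G) (x' : G) (s' : seq G) : bool :=
  all (fun e => e \notin path_arcs x' s') (path_arcs x s).

(* Close a hamiltonian path P, from i to t, into the cyclic permutation p of G
   that sends each vertex to its successor and t to i; being a |G|-cycle, p has
   the same sign for every hamiltonian path. As P does not close up to a
   hamiltonian cycle, the out-neighbour t + a of t is entered in P from
   t + (a - b), and t + b from t - (a - b). Comparing with a second, arc-disjoint
   path P' (closing p', terminal t') gives t <> t' and forces the initial
   vertices to be p' t' = t + x, p t = t' + y with x, y in {a, b}; when x = y the
   claim holds. When x <> y, p^-1 p' moves every vertex by +-(a - b), with a
   direction that is constant along cosets of <a - b> except at t and t', and each
   coset of <a - b> is one of its orbits. So the even permutation p^-1 p' would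
   have sign (-1)^(|G| - |G : <a - b>|) = -1. *)

From mathcomp Require Import all_boot all_order all_algebra all_fingroup all_solvable.
From mathcomp Require Import zify.
Set Implicit Arguments. Unset Strict Implicit. Unset Printing Implicit Defensive.
Import GRing.Theory.

Lemma nat_chain_eq (A : Type) (u : nat -> A) m n :
  (forall k, m <= k < n -> u k.+1 = u k) -> forall k, m <= k <= n -> u k = u m.
Proof.
move=> step; elim=> [|k IH] /andP[mk kn]; first by case: m mk {step} => [|].
have [->|mk'] := eqVneq m k.+1; first by [].
have mk1 : m <= k by rewrite -ltnS ltn_neqAle mk' mk.
by rewrite step ?mk1 // IH // mk1 ltnW.
Qed.

Section NextPerm.

Variables (T : finType) (c : seq T) (Uc : uniq c).

Definition next_perm : {perm T} := perm (can_inj (prev_next Uc)).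

Lemma next_permE : next_perm =1 next c.
Proof. exact: permE. Qed.

Hypothesis c_full : forall x, x \in c.

Lemma porbit_next_perm x : porbit next_perm x = [set: T].
Proof.
apply/setP => y; rewrite inE; apply/porbitP.
have xy : fconnect (next c) x y by rewrite (fconnect_cycle (cycle_next Uc)).
by exists (findex (next c) x y); rewrite permX (eq_iter next_permE) iter_findex.
Qed.

Lemma odd_next_perm (x0 : T) : odd_perm next_perm = ~~ odd #|T|.
Proof.
rewrite /odd_perm; have -> : porbits next_perm = [set [set: T]].
  apply/setP => A; rewrite inE; apply/imsetP/eqP => [[x _ ->]|->].
    exact: porbit_next_perm.
  by exists x0; rewrite ?porbit_next_perm.
by rewrite cards1 addbT.
Qed.

End NextPerm.

Section PathZip.

Variable T : eqType.

Lemma path_mem_zip (e : rel T) (x : T) s u w :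
  path e x s -> (u, w) \in zip (x :: s) s -> e u w.
Proof.
elim: s x => [//|y s IH] x /= /andP[exy pys]; rewrite inE => /orP[/eqP[-> ->]//|].
exact: IH.
Qed.

Lemma next_last (x : T) s : uniq (x :: s) -> next (x :: s) (last x s) = x.
Proof.
move=> Us; rewrite next_nth mem_last (index_last Us); exact: nth_default.
Qed.

Lemma mem_zip_next (x : T) s v : uniq (x :: s) -> v \in x :: s -> v != last x s ->
  (v, next (x :: s) v) \in zip (x :: s) s.
Proof.
move=> Us vs vl; rewrite next_nth vs.
have ks : index v (x :: s) < size s.
  rewrite ltn_neqAle -ltnS index_mem vs andbT; apply: contra vl => /eqP ks.
  by rewrite -(nth_index x vs) ks -[size s]/((size (x :: s)).-1) nth_last.
have zs : size (zip (x :: s) s) = size s by rewrite size_zip /= (minn_idPr (leqnSn _)).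
have := mem_nth (x, x) (_ : index v (x :: s) < size (zip (x :: s) s)).
by rewrite nth_zip_cond zs ks nth_index //; apply.
Qed.

End PathZip.

Lemma porbit_sub_rcoset (gT : finGroupType) (H : {group gT}) (s : {perm gT}) :
  (forall v, s v \in H :* v)%g -> forall x, (porbit s x \subset H :* x)%g.
Proof.
move=> sH x; apply/subsetP => _ /porbitP[n ->]; rewrite permX.
elim: n => [|n IH]; first exact: rcoset_refl.
exact: rcoset_trans (sH _) IH.
Qed.

Lemma porbit_perm1 (T : finType) (s : {perm T}) x : porbit s (s x) = porbit s x.
Proof. exact: (porbit_perm s 1). Qed.

Lemma odd_perm_rcosets (gT : finGroupType) (H : {group gT}) (s : {perm gT}) :
  porbits s = rcosets H [set: gT] -> odd_perm s = odd #|gT| (+) odd #|[set: gT] : H|%g.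
Proof. by rewrite /odd_perm => ->. Qed.

Local Open Scope ring_scope.

Section Multiples.

Variables (T : finZmodType) (d : T).

Lemma mulrn_order : d *+ #[d]%g = 0.
Proof. exact: expg_order. Qed.

Lemma mulrn_mod_order k : d *+ (k %% #[d]%g) = d *+ k.
Proof. exact: expg_mod_order. Qed.

Lemma addr_mulrnS x k : x + d *+ k + d = x + d *+ k.+1.
Proof. by rewrite mulrSr addrA. Qed.

Lemma addr_mulrn_neq x m n : (m < n < m + #[d]%g)%N -> x + d *+ m != x + d *+ n.
Proof.
case/andP=> mn nmh; rewrite (inj_eq (addrI x)) [_ == _]eq_expg_mod_order.
move: #[d]%g nmh => h nmh.
rewrite -(subnKC (ltnW mn)) -{1}[m]addn0 eqn_modDl mod0n.
rewrite modn_small; first by rewrite eq_sym -lt0n subn_gt0.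
by rewrite ltn_subLR // ltnW.
Qed.

Lemma addr_mulrn_order x : x + d *+ #[d]%g = x.
Proof. by rewrite mulrn_order addr0. Qed.

Lemma addr_mulrn_neq0 x k : (0 < k < #[d]%g)%N -> x + d *+ k != x.
Proof. by move=> k0h; rewrite -{2}[x]addr0 -(mulr0n d) eq_sym addr_mulrn_neq. Qed.

Lemma oppr_mulrn_order k : - (d *+ k) = d *+ (k * (#[d]%g).-1).
Proof.
apply/eqP; rewrite eq_sym -subr_eq0 opprK -mulrnDr.
have -> : (k * (#[d]%g).-1 + k = k * #[d]%g)%N.
  by case: #[d]%g (order_gt0 d) => //= h _; rewrite mulnS addnC.
by rewrite mulnC mulrnA mulrn_order mul0rn.
Qed.

Lemma mem_rcoset_mulrn x y : (y \in <[d]> :* x)%g -> exists k, y = x + d *+ k.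
Proof.
rewrite mem_rcoset => /cycleP[k ykx]; exists k.
have yxk : y - x = d *+ k := ykx.
by rewrite -yxk addrC subrK.
Qed.

Lemma rcoset_addr_mulrn x k : (x + d *+ k \in <[d]> :* x)%g.
Proof.
rewrite mem_rcoset; change (x + d *+ k - x \in <[d]>%g).
by rewrite addrC addKr mem_cycle.
Qed.

Lemma rcoset_addr x : (x + d \in <[d]> :* x)%g.
Proof. by rewrite -{1}(mulr1n d) rcoset_addr_mulrn. Qed.

Lemma rcoset_subr x : (x - d \in <[d]> :* x)%g.
Proof. by rewrite -{1}(mulr1n d) oppr_mulrn_order rcoset_addr_mulrn. Qed.

End Multiples.

Section CosetOrbits.

Variables (T : finZmodType) (d : T) (s : {perm T}) (back : pred T) (t t' : T).

Hypothesis back_shift : forall v, v != t -> v + d != t' -> back (v + d) = back v.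
Hypothesis back_t : back t.
Hypothesis back_td : ~~ back (t + d).
Hypothesis s_step :
  forall v, v != t' -> v + d != t' -> s v = if back v then v - d else v + d.
Hypothesis s_t' : s t' = t + d.
Hypothesis s_t'd : s (t' - d) = t.

Local Notation h := #[d]%g.
Local Notation u k := (t + d *+ k).

Lemma terminal_offset : exists2 J, (1 < J <= h)%N & t' = u J.
Proof.
have [/existsP[J /andP[J1 /eqP t'J]]|noJ] :=
  boolP [exists J : 'I_h.+1, (1 < J)%N && (t' == u J)].
  by exists J; rewrite // J1 -ltnS ltn_ord.
have back_run : forall k, (1 <= k <= h)%N -> back (u k) = back (u 1).
  apply: nat_chain_eq => k /andP[k1 kh].
  rewrite -addr_mulrnS back_shift ?addr_mulrn_neq0 ?k1 //.
  rewrite addr_mulrnS eq_sym; apply: contra noJ => /eqP t'k.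
  apply/existsP; exists (Ordinal (kh : k.+1 < h.+1)%N).
  by rewrite /= t'k eqxx ltnS k1.
have := back_run h; rewrite addr_mulrn_order back_t order_gt0 leqnn mulr1n.
by move=> /(_ isT) back_td_t; move: back_td; rewrite -back_td_t.
Qed.

(* With [t' = t + d *+ J], the permutation [s] runs through the coset of [t]
   as t, t - d, ..., t', t + d, ..., t' - d, t. *)
Section Offset.

Variable J : nat.
Hypotheses (J_gt1 : (1 < J)%N) (J_le : (J <= h)%N) (t'E : t' = u J).

Lemma back_before_offset k : (0 < k < J)%N -> back (u k) = false.
Proof.
move=> /andP[k0 kJ].
have back_run :
    forall k, (1 <= k <= J.-1)%N -> back (u k) = back (u 1).
  apply: nat_chain_eq => {k0 kJ}k /andP[k1 kJ].
  rewrite -addr_mulrnS back_shift ?addr_mulrn_neq0 ?k1 //=; first lia.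
  by rewrite addr_mulrnS t'E addr_mulrn_neq //; lia.
by rewrite back_run ?mulr1n ?(negbTE back_td) //; lia.
Qed.

Lemma back_from_offset k : (J <= k <= h)%N -> back (u k).
Proof.
move: k; have back_run : forall k, (J <= k <= h)%N -> back (u k) = back (u J).
  apply: nat_chain_eq => k /andP[Jk kh].
  rewrite -addr_mulrnS back_shift ?addr_mulrn_neq0 //; first by lia.
  by rewrite addr_mulrnS t'E eq_sym addr_mulrn_neq //; lia.
by move=> k Jkh; rewrite back_run // -(back_run h) ?addr_mulrn_order // J_le leqnn.
Qed.

Lemma porbit_before_offset k : (0 < k < J)%N -> porbit s (u k) = porbit s t'.
Proof.
move: k; have orbit_run :
    forall k, (1 <= k <= J.-1)%N -> porbit s (u k) = porbit s (u 1).
  apply: nat_chain_eq => k /andP[k1 kJ].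
  rewrite -[in RHS]porbit_perm1 s_step ?back_before_offset ?addr_mulrnS // ?t'E;
    try lia.
    by rewrite addr_mulrn_neq //; lia.
  by rewrite addr_mulrn_neq //; lia.
by move=> k kJ; rewrite orbit_run ?mulr1n -?s_t' ?porbit_perm1 //; lia.
Qed.

Lemma porbit_from_offset k : (J <= k <= h)%N -> porbit s (u k) = porbit s t'.
Proof.
move: k; have orbit_run :
    forall k, (J <= k <= h)%N -> porbit s (u k) = porbit s (u J).
  apply: nat_chain_eq => k /andP[Jk kh].
  rewrite -[in RHS](_ : s (u k.+1) = u k) ?porbit_perm1 //.
  rewrite s_step ?back_from_offset -?addr_mulrnS ?addrK //; first by lia.
    by rewrite addr_mulrnS t'E eq_sym addr_mulrn_neq //; lia.
  by rewrite !addr_mulrnS t'E eq_sym addr_mulrn_neq //; lia.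
by move=> k Jkh; rewrite orbit_run // t'E.
Qed.

Lemma porbit_terminal_coset n : u n \in porbit s t'.
Proof.
set k := ((n + h.-1) %% h).+1.
have -> : u n = u k.
  rewrite -addr_mulrnS mulrn_mod_order addr_mulrnS -addnS prednK ?order_gt0 //.
  by rewrite mulrnDr mulrn_order addr0.
have k_le : (0 < k <= h)%N by rewrite /k ltn_pmod ?order_gt0.
have [kJ|Jk] := ltnP k J.
  by rewrite -(porbit_before_offset (_ : 0 < k < J)%N) ?porbit_id //; lia.
by rewrite -(porbit_from_offset (_ : J <= k <= h)%N) ?porbit_id //; lia.
Qed.

Lemma perm_mem_rcoset v : (s v \in <[d]> :* v)%g.
Proof.
have t'_t : (t' \in <[d]> :* t)%g by rewrite t'E rcoset_addr_mulrn.
have [->|vt'] := eqVneq v t'.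
  by rewrite s_t' (rcoset_trans (rcoset_addr _ t)) // rcoset_sym.
have [vd|vdt'] := eqVneq (v + d) t'.
  rewrite (_ : v = t' - d) ?s_t'd; last by rewrite -vd addrK.
  by rewrite rcoset_sym (rcoset_trans (rcoset_subr _ t')).
by rewrite s_step //; case: (back v); rewrite ?rcoset_subr ?rcoset_addr.
Qed.

Lemma porbit_free_coset x : (forall k, x + d *+ k != t) ->
  forall n, x + d *+ n \in porbit s x.
Proof.
move=> xt; have xt' k : x + d *+ k != t'.
  apply: contraNneq (xt (k + (h - J))%N) => xkt'.
  by rewrite mulrnDr addrA xkt' t'E -addrA -mulrnDr subnKC // addr_mulrn_order.
have back_x k : back (x + d *+ k) = back x.
  elim: k => [|k IH]; first by rewrite mulr0n addr0.
  by rewrite -addr_mulrnS back_shift // addr_mulrnS.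
have orbit_x n : porbit s (x + d *+ n) = porbit s x.
  elim: n => [|k IH]; first by rewrite mulr0n addr0.
  rewrite -IH; case back_xE: (back x).
    have sk1 : s (x + d *+ k.+1) = x + d *+ k.
      by rewrite s_step ?back_x ?back_xE -?addr_mulrnS ?addrK ?addr_mulrnS.
    by rewrite -sk1 porbit_perm1.
  have sk : s (x + d *+ k) = x + d *+ k.+1.
    by rewrite s_step ?back_x ?back_xE ?addr_mulrnS.
  by rewrite -sk porbit_perm1.
by move=> n; rewrite -(orbit_x n) porbit_id.
Qed.

End Offset.

Lemma porbits_rcosets : porbits s = rcosets <[d]> [set: T].
Proof.
have [J /andP[J1 Jh] t'E] := terminal_offset.
have orbit_t' := porbit_terminal_coset J1 Jh t'E.
have orbitE x : porbit s x = (<[d]> :* x)%g.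
  apply/eqP; rewrite eqEsubset porbit_sub_rcoset /=; last exact: perm_mem_rcoset t'E.
  apply/subsetP => _ /mem_rcoset_mulrn[n ->].
  have [/existsP[k /eqP xkt]|] := boolP [exists k : 'I_h, x + d *+ k == t].
    have xE : x = u (k * h.-1) by rewrite -oppr_mulrn_order -xkt addrK.
    have /eqP-> : porbit s x == porbit s t' by rewrite eq_porbit_mem xE orbit_t'.
    by rewrite xE -addrA -mulrnDr orbit_t'.
  move/existsPn => xt; apply: (porbit_free_coset Jh t'E) => k.
  by have := xt (Ordinal (ltn_pmod k (order_gt0 d))); rewrite /= mulrn_mod_order.
apply/setP => A; apply/imsetP/imsetP => -[x _ ->]; exists x => //.
  by rewrite orbitE rcosetE.
by rewrite orbitE rcosetE.
Qed.

End CosetOrbits.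

Section CayleyArcs.

Variables (G : finZmodType) (a b : G).

Lemma cay_arcC : cay_arc a b =2 cay_arc b a.
Proof. by move=> v w; rewrite /cay_arc orbC. Qed.

Lemma cay_arc_to_addr u v : cay_arc a b v (u + a) -> v != u -> v = u + (a - b).
Proof.
case/orP=> /eqP uv vu; first by move: vu; rewrite (addIr a uv) eqxx.
by rewrite addrA uv addrK.
Qed.

Lemma addr_subr_neq x : a != b -> x + (a - b) != x.
Proof. by rewrite -{2}[x]addr0 (inj_eq (addrI x)) subr_eq0. Qed.

End CayleyArcs.

(* [p] is the successor map of a hamiltonian path ending at [t], closed up by
   sending [t] to the initial vertex [p t]; the second conjunct says that the
   path does not close up to a hamiltonian cycle. *)
Definition closing_perm (G : finZmodType) (a b : G) (p : {perm G}) (t : G) :=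
  (forall v, v != t -> cay_arc a b v (p v)) /\ ~~ cay_arc a b t (p t).

Lemma closing_permC (G : finZmodType) (a b : G) p t :
  closing_perm a b p t -> closing_perm b a p t.
Proof. by case=> arc nt; split=> [v vt|]; rewrite cay_arcC //; apply: arc. Qed.

Section ClosingPerm.

Variables (G : finZmodType) (a b : G) (p : {perm G}) (t : G).
Hypothesis p_closing : closing_perm a b p t.

Lemma closing_arc v : p v != p t -> cay_arc a b v (p v).
Proof. by move=> pvt; apply: p_closing.1; apply: contraNneq pvt => ->. Qed.

Lemma closing_perm_to_addr : p (t + (a - b)) = t + a.
Proof.
set y := p^-1%g (t + a); have py : p y = t + a by rewrite permKV.
have pyt : p y != p t.
  by rewrite py; apply: contraNneq p_closing.2 => <-; rewrite /cay_arc eqxx.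
have yt : y != t by apply: contraNneq pyt => ->.
have := closing_arc pyt; rewrite py => /cay_arc_to_addr/(_ yt) <-.
exact: py.
Qed.

(* Counting the terminal vertex as travelling along [b] makes
   [travels_b_shift] hold also at [v = t]. *)
Definition travels_b v := (v == t) || (p v == v + b).

Hypothesis ab : a != b.

Lemma travels_b_shift v : v + a != p t -> v + (a - b) != t ->
  travels_b (v + (a - b)) = travels_b v.
Proof.
move=> vat vdt; rewrite /travels_b (negbTE vdt) /=.
have [->|vt] := eqVneq v t; first by rewrite closing_perm_to_addr -addrA subrK eqxx.
set y := p^-1%g (v + a); have py : p y = v + a by rewrite permKV.
have pyt : p y != p t by rewrite py.
have yva : cay_arc a b y (v + a) by rewrite -py closing_arc.
have [yv|yv] := eqVneq y v.
  rewrite yv in py; rewrite py (inj_eq (addrI v)) (negbTE ab) -addrA subrK -py.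
  by rewrite (inj_eq perm_inj) (negbTE (addr_subr_neq v ab)).
rewrite (cay_arc_to_addr yva yv) in py; rewrite py -addrA subrK eqxx.
have := p_closing.1 v vt; case/orP=> /eqP pv; last by rewrite pv eqxx.
by case/negP: (addr_subr_neq v ab); apply/eqP/(@perm_inj _ p); rewrite py pv.
Qed.

End ClosingPerm.

Section TwoClosings.

Variables (G : finZmodType) (a b : G) (p p' : {perm G}) (t t' : G).
Hypotheses (ab : a != b) (p_closing : closing_perm a b p t).
Hypothesis p'_closing : closing_perm a b p' t'.
Hypothesis pp'_disjoint : forall v, v != t -> v != t' -> p v != p' v.

Lemma closing_terminal_neq : t != t'.
Proof.
apply/eqP => tt'; have tdt := addr_subr_neq t ab.
have tdt' : t + (a - b) != t' by rewrite -tt'.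
move/(_ tdt'): (pp'_disjoint tdt).
by rewrite (closing_perm_to_addr p_closing) tt' (closing_perm_to_addr p'_closing) eqxx.
Qed.

Lemma closing_initial_addr : p' t' != t + a -> p' t = t + a.
Proof.
move=> p't'; set y := p'^-1%g (t + a); have py : p' y = t + a by rewrite permKV.
have yt' : y != t' by apply: contraNneq p't' => <-; rewrite py.
have [yt|yt] := eqVneq y t; first by rewrite -py yt.
have := p'_closing.1 y yt'; rewrite py => /cay_arc_to_addr/(_ yt) yE.
by move: (pp'_disjoint yt yt'); rewrite py {1}yE (closing_perm_to_addr p_closing) eqxx.
Qed.

(* [(p' * p^-1) v] is the vertex from which P enters the P'-successor of [v];
   by arc-disjointness it is [v + (a - b)] or [v - (a - b)]. *)
Lemma porbits_mixed_initials : p' t' = t + a -> p t = t' + b ->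
  porbits (p' * p^-1) = rcosets <[a - b]> [set: G].
Proof.
move=> p't' pt; have tt' := closing_terminal_neq.
have p't : p' t = t + b.
  have := p'_closing.1 t tt'; case/orP=> /eqP // p't.
  by move: tt'; rewrite -(inj_eq (@perm_inj _ p')) p't p't' eqxx.
have tdt' : t + (a - b) != t'.
  apply: contraNneq p_closing.2 => tdt'.
  by rewrite pt -tdt' -addrA subrK /cay_arc eqxx.
apply: (porbits_rcosets (back := travels_b b p' t') (t := t) (t' := t')).
- move=> v vt vdt'; apply: travels_b_shift => //.
  by rewrite p't' (inj_eq (addIr a)).
- by rewrite /travels_b p't eqxx orbT.
- rewrite /travels_b (negbTE tdt') -addrA subrK -p't' (inj_eq perm_inj).
  exact: tdt'.
- move=> v vt' vdt'; rewrite permM /travels_b (negbTE vt') /=.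
  set z := p^-1%g (p' v); have pz : p z = p' v by rewrite permKV.
  have pzt : p z != p t.
    rewrite pz pt; have := p'_closing.1 v vt'; case/orP=> /eqP ->.
      by apply: contra vdt' => /eqP vat; apply/eqP/(addIr b); rewrite -addrA subrK.
    by rewrite (inj_eq (addIr b)).
  have zv : z != v.
    apply/eqP => zv; have vt : v != t by apply: contraNneq pzt => <-; rewrite zv.
    by move: (pp'_disjoint vt vt'); rewrite -pz zv eqxx.
  have := closing_arc p_closing pzt; rewrite pz.
  have := p'_closing.1 v vt'; case/orP=> /eqP ->.
    by rewrite (inj_eq (addrI v)) (negbTE ab) => /cay_arc_to_addr/(_ zv).
  rewrite eqxx cay_arcC => /cay_arc_to_addr/(_ zv) ->.
  by rewrite opprB.
- by rewrite permM p't' -(closing_perm_to_addr p_closing) permK.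
- rewrite permM opprB (closing_perm_to_addr (closing_permC p'_closing)) -pt.
  exact: permK.
Qed.

End TwoClosings.

Lemma closing_initial (G : finZmodType) (a b : G) (p p' : {perm G}) (t t' : G) :
  a != b -> closing_perm a b p t -> closing_perm a b p' t' ->
  (forall v, v != t -> v != t' -> p v != p' v) ->
  p' t' = t + a \/ p' t' = t + b.
Proof.
move=> ab p_closing p'_closing pp'_disjoint.
have [p't'|p't'a] := eqVneq (p' t') (t + a); [by left | right].
apply/eqP; apply: contraT => p't'b.
have := closing_initial_addr p_closing p'_closing pp'_disjoint p't'a.
rewrite (closing_initial_addr (closing_permC p_closing) (closing_permC p'_closing)) //.
by move/(addrI t)/eqP; rewrite eq_sym (negbTE ab).
Qed.

Lemma closing_initials_sum (G : finZmodType) (a b : G) (p p' : {perm G}) (t t' : G) :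
  a != b -> closing_perm a b p t -> closing_perm a b p' t' ->
  (forall v, v != t -> v != t' -> p v != p' v) ->
  odd_perm p = odd_perm p' -> ~~ odd #|G| -> odd #|[set: G] : <[a - b]>|%g ->
  p' t' + t' = p t + t.
Proof.
move=> ab p_closing p'_closing pp'_disjoint odd_pp' G_even index_odd.
have p'p_disjoint v : v != t' -> v != t -> p' v != p v.
  by move=> vt' vt; rewrite eq_sym pp'_disjoint.
have no_mixed (s r : {perm G}) :
    porbits (s * r^-1) = rcosets <[a - b]> [set: G] -> odd_perm s = odd_perm r -> False.
  move/odd_perm_rcosets; rewrite odd_permM odd_permV => + sr; rewrite sr addbb.
  by rewrite (negbTE G_even) index_odd.
have [p't'|p't'] := closing_initial ab p_closing p'_closing pp'_disjoint;
  have [pt|pt] := closing_initial ab p'_closing p_closing p'p_disjoint.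
- by rewrite p't' pt addrAC [RHS]addrAC (addrC t).
- have := porbits_mixed_initials ab p_closing p'_closing pp'_disjoint p't' pt.
  by move/no_mixed/(_ (esym odd_pp')).
- have := porbits_mixed_initials ab p'_closing p_closing p'p_disjoint pt p't'.
  by move/no_mixed/(_ odd_pp').
- by rewrite p't' pt addrAC [RHS]addrAC (addrC t).
Qed.

Lemma ham_path_closing (G : finZmodType) (a b : G) i s :
  ham_path a b i s -> ~ (exists c, ham_cycle a b c) ->
  exists p : {perm G}, [/\ closing_perm a b p (last i s), p (last i s) = i,
    forall v, v != last i s -> (v, p v) \in path_arcs i s
  & odd_perm p = ~~ odd #|G|].
Proof.
case/and3P=> path_s uniq_s /eqP size_s no_cycle.
have full : forall x, x \in i :: s.
  have card_s : #|[mem i :: s]| = #|G| by rewrite (card_uniqP uniq_s) size_s.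
  by move=> x; have := subset_cardP card_s (subset_predT _) => /(_ x); rewrite inE.
have pt : next_perm uniq_s (last i s) = i by rewrite next_permE next_last.
have arcs v : v != last i s -> (v, next_perm uniq_s v) \in path_arcs i s.
  by rewrite next_permE; apply: mem_zip_next.
exists (next_perm uniq_s); split=> //; last exact: odd_next_perm.
split=> [v /arcs|]; first exact: path_mem_zip.
rewrite pt; apply: contra_notN no_cycle => closing_arc.
exists (i :: s); apply/and3P; split; rewrite ?size_s //.
by rewrite /= rcons_path path_s closing_arc.
Qed.

Theorem mainTheorem10 (G : finZmodType) (a b : G) :
  a != b ->
  (<<[set a; b]>>%g = [set: G]) ->
  ~ (exists c : seq G, ham_cycle a b c) ->
  ~~ odd #|G| ->
  odd #|[set: G] : <[(a - b)%R]>|%g ->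
  forall (i : G) (s : seq G) (i' : G) (s' : seq G),
    ham_path a b i s -> ham_path a b i' s' -> arc_disjoint i s i' s' ->
    (i' + last i' s' = i + last i s)%R.
Proof.
move=> ab _ no_cycle G_even index_odd i s i' s' P P' PP'.
have [p [p_closing pt p_arcs p_odd]] := ham_path_closing P no_cycle.
have [p' [p'_closing p't' p'_arcs p'_odd]] := ham_path_closing P' no_cycle.
have pp'_disjoint v : v != last i s -> v != last i' s' -> p v != p' v.
  move=> vt vt'; apply: contraTneq (allP PP' _ (p_arcs v vt)) => ->.
  by rewrite negbK p'_arcs.
have := closing_initials_sum ab p_closing p'_closing pp'_disjoint _ G_even index_odd.
by rewrite p't' pt p_odd p'_odd; apply.
Qed.
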